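(* Let $p>1$ and let $\widetilde{T}_0, T$ be constants with $0\le\widetilde{T}_0<T$. Suppose that $A\in C^1([\widetilde{T}_0,T))$, $B\in C^1([0,T))$ and $m\in C^1([0,T))$ are strictly positive functions, that $B$ is decreasing, and that there are constants $\overline{m},\underline{m}>0$ with $\underline{m}\le m(t)\le\overline{m}$ for $t\ge0$. Define \[ h(t):=B(t)^{1/2}A(t)^{(p-1)/2-\delta}, \] where $\delta$ is a constant with $0<\delta<(p-1)/2$ such that $h'(t)\ge0$ for $t\ge\widetilde{T}_0$. Assume that $F\in C^2([0,T))$ satisfies \[ F(t)\ge A(t)\ \text{for } t\ge\widetilde{T}_0,\qquad \{m(t)F'(t)\}'\ge B(t)|F(t)|^p\ \text{for } t\ge0, \] \[ F(0)\ge0,\quad F'(0)\ge0,\quad F(0)+F'(0)>0 . \] If $F'(0)=0$, suppose moreover that there exists a time $\widetilde{t}>0$ such that $F(\widetilde{t})\ge 2F(0)$. Define $\widetilde{T}_1:=\overline{m}\,\underline{m}^{-1}F(0)/F'(0)$ if $F'(0)\ne0$, and $\widetilde{T}_1:=\widetilde{t}$ if $F'(0)=0$. Then, for $\widetilde{T}\ge\max\{\widetilde{T}_0,\widetilde{T}_1\}$, we have $T\le 3\widetilde{T}$, provided that \[ \widetilde{T}\,h(\widetilde{T})\,A(\widetilde{T})^{\delta}\ge \delta^{-1}\,\overline{m}\sqrt{(p+1)/\underline{m}} . \] *)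

From Stdlib Require Import Reals Lra.
From Coquelicot Require Import Coquelicot.
Open Scope R_scope.

(* x^y for x >= 0 and real y > 0, with the convention 0^y = 0
   (Stdlib's Rpower 0 y would be 1, which is wrong for |F|^p). *)
Definition powR (x y : R) : R := if Rle_dec x 0 then 0 else Rpower x y.

(* f is C^1 on the half-open interval [a,b) with derivative f':
   f has derivative f' t at every interior point, and f, f' are continuous
   on [a,b) (continuity within [a,b), i.e. right-continuity at a).
   By the mean value theorem this gives the one-sided derivative f' a at a. *)
Definition C1_on (a b : R) (f f' : R -> R) : Prop :=
  (forall t, a < t < b -> is_derive f t (f' t)) /\
  (forall t, a <= t < b ->
     filterlim f (within (fun s => a <= s < b) (locally t)) (locally (f t))) /\
  (forall t, a <= t < b ->
     filterlim f' (within (fun s => a <= s < b) (locally t)) (locally (f' t))).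

Definition hfun (A B : R -> R) (p delta : R) (t : R) : R :=
  powR (B t) (1/2) * powR (A t) ((p - 1) / 2 - delta).

Definition T1til (mbar mlow F0 F1_0 ttil : R) : R :=
  if Req_EM_T F1_0 0 then ttil else mbar / mlow * F0 / F1_0.

(* The flux m F' is nondecreasing, so F' >= mlow F'(0) / mbar and F grows at least
   linearly; by the choice of T~_1 this gives F(T~) >= 2 F(0).  Multiplying
   {m F'}' >= B F^p by m F' and using that B decreases yields the energy bound
   (m F')^2 >= mlow B F^(p+1) / (p+1) on [T~, T).  Since A <= F and h is nondecreasing,
   this becomes the Riccati inequality F' >= c h(T~) F^(1+delta) with
   c = 1 / (mbar sqrt((p+1)/mlow)), along which F^(-delta) decreases at rate
   delta c h(T~); the assumption on T~ would make it vanish before time 2 T~, so in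
   fact T <= 2 T~. *)

From Stdlib Require Import Reals Lra.
From Coquelicot Require Import Coquelicot.
Open Scope R_scope.

Lemma filterlim_within_subset (f : R -> R) (D1 D2 : R -> Prop) (x l : R) :
  (forall s, D1 s -> D2 s) ->
  filterlim f (within D2 (locally x)) (locally l) ->
  filterlim f (within D1 (locally x)) (locally l).
Proof.
  intros HD H. apply filterlim_filter_le_1 with (2 := H).
  intros P HP. unfold within in *. apply filter_imp with (2 := HP). auto.
Qed.

Lemma filterlim_Rmult {U} (F : (U -> Prop) -> Prop) {FF : Filter F} (f g : U -> R) a b :
  filterlim f F (locally a) -> filterlim g F (locally b) ->
  filterlim (fun x => f x * g x) F (locally (a * b)).
Proof.
  intros Hf Hg. eapply filterlim_comp_2; [exact Hf | exact Hg |].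
  apply (@filterlim_mult R_AbsRing a b).
Qed.

Lemma filterlim_Rminus {U} (F : (U -> Prop) -> Prop) {FF : Filter F} (f g : U -> R) a b :
  filterlim f F (locally a) -> filterlim g F (locally b) ->
  filterlim (fun x => f x - g x) F (locally (a - b)).
Proof.
  intros Hf Hg.
  assert (Hg' : filterlim (fun x => - g x) F (locally (- b))).
  { eapply filterlim_comp; [exact Hg | apply (filterlim_opp (V := R_NormedModule))]. }
  refine (filterlim_comp_2 f (fun x => - g x) Rplus Hf Hg' _).
  apply (@filterlim_plus R_AbsRing R_NormedModule a (- b)).
Qed.

Lemma is_derive_continuous (f : R -> R) x l :
  is_derive f x l -> filterlim f (locally x) (locally (f x)).
Proof.
  intros H. apply (ex_derive_continuous (K := R_AbsRing) (V := R_NormedModule)).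
  exists l; exact H.
Qed.

Lemma filterlim_locally_ball (f : R -> R) (F : (R -> Prop) -> Prop) l (e : posreal) :
  filterlim f F (locally l) -> F (fun y => Rabs (f y - l) < e).
Proof. intros H. apply (H (fun z => Rabs (z - l) < e)). now exists e. Qed.

Lemma le_of_derive_ge0 (g g' : R -> R) a b : a <= b ->
  (forall x, a <= x <= b -> is_derive g x (g' x)) ->
  (forall x, a <= x <= b -> 0 <= g' x) -> g a <= g b.
Proof.
  intros Hab Hd Hpos.
  destruct (MVT_gen g a b g') as [c [Hc Hgc]];
    rewrite ?Rmin_left, ?Rmax_right in * by lra.
  - intros x Hx. apply Hd. lra.
  - intros x Hx. apply continuity_pt_filterlim, (is_derive_continuous _ _ _ (Hd x Hx)).
  - assert (0 <= g' c) by (apply Hpos; lra). nra.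
Qed.

Lemma nondecreasing_of_derive_ge0 (g g' : R -> R) a b :
  (forall x, a < x < b -> is_derive g x (g' x)) ->
  (forall x, a < x < b -> 0 <= g' x) ->
  filterlim g (within (fun s => a <= s < b) (locally a)) (locally (g a)) ->
  forall s t, a <= s -> s <= t -> t < b -> g s <= g t.
Proof.
  intros Hd Hpos Hca.
  assert (Hint : forall s t, a < s -> s <= t -> t < b -> g s <= g t).
  { intros s t Hs Hst Ht. apply (le_of_derive_ge0 g g'); trivial; intros x Hx.
    - apply Hd. lra.
    - apply Hpos. lra. }
  intros s t Has Hst Htb.
  destruct (Rle_lt_or_eq_dec a s Has) as [Has'|<-]; [now apply Hint|].
  destruct (Rle_lt_or_eq_dec a t Hst) as [Hat|<-]; [|lra].
  destruct (Rle_or_lt (g a) (g t)) as [|Hlt]; [assumption|exfalso].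
  (* a point y in (a, t] with g y as close to g a as needed contradicts g y <= g t < g a *)
  assert (He : 0 < g a - g t) by lra.
  destruct (filterlim_locally_ball g _ _ (mkposreal _ He) Hca) as [del Hdel].
  set (y := a + Rmin (del / 2) (t - a)).
  assert (Hy : a < y <= t).
  { unfold y. pose proof (cond_pos del).
    pose proof (Rmin_glb_lt (del / 2) (t - a) 0). pose proof (Rmin_r (del / 2) (t - a)). lra. }
  assert (Hgy : Rabs (g y - g a) < g a - g t).
  { apply Hdel; [|lra]. change (Rabs (y - a) < del). rewrite Rabs_right by lra.
    unfold y. pose proof (cond_pos del). pose proof (Rmin_l (del / 2) (t - a)). lra. }
  assert (g y <= g t) by (apply Hint; lra).
  apply Rabs_def2 in Hgy. lra.
Qed.

Lemma Rpower_pos x y : 0 < Rpower x y.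
Proof. apply exp_pos. Qed.

Lemma powR_Rpower x y : 0 < x -> powR x y = Rpower x y.
Proof. intros Hx. unfold powR. destruct (Rle_dec x 0); [lra | reflexivity]. Qed.

Lemma powR_ge0 x y : 0 <= powR x y.
Proof. unfold powR. destruct (Rle_dec x 0); [lra | left; apply Rpower_pos]. Qed.

Lemma Rpower_half_sq x : 0 < x -> Rpower x (1 / 2) ^ 2 = x.
Proof.
  intros Hx. rewrite <- (Rpower_pow 2) by apply Rpower_pos.
  rewrite Rpower_mult. replace (1 / 2 * INR 2) with 1 by (simpl; field).
  apply Rpower_1, Hx.
Qed.

Lemma Rpower_le_sq_scaled x y l r : 0 < x <= y -> x <= l * y -> 2 <= r ->
  Rpower x r <= l ^ 2 * Rpower y r.
Proof.
  intros Hxy Hl Hr. replace r with ((r - 2) + INR 2) by (simpl; ring).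
  rewrite !Rpower_plus, !Rpower_pow by lra.
  assert (Rpower x (r - 2) <= Rpower y (r - 2)) by (apply Rle_Rpower_l; lra).
  assert (x ^ 2 <= l ^ 2 * y ^ 2) by nra.
  pose proof (Rpower_pos x (r - 2)). nra.
Qed.

Lemma locally_pos_of_continuous (f : R -> R) x :
  filterlim f (locally x) (locally (f x)) -> 0 < f x -> locally x (fun s => 0 < f s).
Proof.
  intros Hc Hx. apply filter_imp with (2 := filterlim_locally_ball f _ _ (mkposreal _ Hx) Hc).
  intros s Hs. apply Rabs_def2 in Hs. simpl in Hs. lra.
Qed.

Lemma is_derive_Rpower_comp (f : R -> R) x d y : 0 < f x -> is_derive f x d ->
  is_derive (fun s => Rpower (f s) y) x (d * (y * Rpower (f x) (y - 1))).
Proof.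
  intros Hx Hd. apply (is_derive_comp (fun u => Rpower u y) f x); [|exact Hd].
  apply is_derive_Reals, derivable_pt_lim_power, Hx.
Qed.

Lemma is_derive_powR_comp (f : R -> R) x d y : 0 < f x -> is_derive f x d ->
  is_derive (fun s => powR (f s) y) x (d * (y * Rpower (f x) (y - 1))).
Proof.
  intros Hx Hd. apply is_derive_ext_loc with (fun s => Rpower (f s) y).
  - apply filter_imp
      with (2 := locally_pos_of_continuous f x (is_derive_continuous f x d Hd) Hx).
    intros s Hs. symmetry. apply powR_Rpower, Hs.
  - apply is_derive_Rpower_comp; assumption.
Qed.

Lemma powR_continuous x y : 0 < x ->
  filterlim (fun u => powR u y) (locally x) (locally (powR x y)).
Proof.
  intros Hx. apply (is_derive_continuous (fun u => powR u y) x (1 * (y * Rpower x (y - 1)))).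
  apply (is_derive_powR_comp (fun u => u)); [exact Hx|].
  apply (is_derive_id (K := R_AbsRing)).
Qed.

Lemma hfun_nondecreasing (A A1 B B1 : R -> R) (p delta T0 T : R) :
  0 <= T0 -> C1_on T0 T A A1 -> C1_on 0 T B B1 ->
  (forall t, T0 <= t < T -> 0 < A t) -> (forall t, 0 <= t < T -> 0 < B t) ->
  (forall t, T0 < t < T -> 0 <= Derive (hfun A B p delta) t) ->
  forall s t, T0 <= s -> s <= t -> t < T -> hfun A B p delta s <= hfun A B p delta t.
Proof.
  intros HT0 [HAd [HAc _]] [HBd [HBc _]] HA HB Hh s t Hs Hst Ht.
  refine (nondecreasing_of_derive_ge0 (hfun A B p delta) (Derive (hfun A B p delta)) T0 T
            _ Hh _ s t Hs Hst Ht).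
  - intros x Hx. apply Derive_correct. eexists. unfold hfun.
    apply (is_derive_mult (fun t => powR (B t) (1 / 2))
                          (fun t => powR (A t) ((p - 1) / 2 - delta))).
    + apply is_derive_powR_comp; [apply HB | apply HBd]; lra.
    + apply is_derive_powR_comp; [apply HA | apply HAd]; lra.
    + intros; apply Rmult_comm.
  - unfold hfun. apply filterlim_Rmult; [apply within_filter, locally_filter | |].
    + apply (filterlim_comp _ _ _ B (fun u => powR u (1 / 2)) _ (locally (B T0)));
        [| apply powR_continuous, HB; lra].
      apply (filterlim_within_subset B _ (fun s => 0 <= s < T)); [intros; lra | apply HBc; lra].
    + apply (filterlim_comp _ _ _ A (fun u => powR u ((p - 1) / 2 - delta)) _ (locally (A T0)));
        [apply HAc; lra | apply powR_continuous, HA; lra].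
Qed.

Lemma riccati_of_energy (a b f f1 mt p delta mlow mbar : R) :
  -1 < p -> 0 <= (p - 1) / 2 - delta -> 0 < a <= f -> 0 < b -> 0 <= f1 ->
  0 < mlow -> 0 <= mt <= mbar -> 0 < mbar ->
  mlow * b / (p + 1) * Rpower f (p + 1) <= (mt * f1) ^ 2 ->
  / (mbar * sqrt ((p + 1) / mlow)) * (powR b (1 / 2) * powR a ((p - 1) / 2 - delta))
    * Rpower f (1 + delta) <= f1.
Proof.
  intros Hp Hq Haf Hb Hf1 Hmlow Hmt Hmbar Henergy.
  rewrite !powR_Rpower by lra.
  set (q := (p - 1) / 2 - delta) in *.
  set (c := / (mbar * sqrt ((p + 1) / mlow))).
  assert (Hsqrt : sqrt ((p + 1) / mlow) ^ 2 = (p + 1) / mlow)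
    by (rewrite <- Rsqr_pow2; apply Rsqr_sqrt, Rlt_le, Rdiv_lt_0_compat; lra).
  assert (Hsqrt_pos : 0 < sqrt ((p + 1) / mlow)) by (apply sqrt_lt_R0, Rdiv_lt_0_compat; lra).
  assert (Hc : 0 < c) by (apply Rinv_0_lt_compat, Rmult_lt_0_compat; lra).
  assert (Hc2 : c ^ 2 * mbar ^ 2 = mlow / (p + 1))
    by (unfold c; rewrite pow_inv, Rpow_mult_distr, Hsqrt; field; lra).
  assert (Haq : Rpower a q <= Rpower f q) by (apply Rle_Rpower_l; lra).
  (* the exponent q of A in h is chosen so that 2 q + 2 (1 + delta) = p + 1 *)
  assert (Hf_split : (Rpower f q * Rpower f (1 + delta)) ^ 2 = Rpower f (p + 1)).
  { rewrite <- Rpower_plus, <- (Rpower_pow 2) by apply Rpower_pos.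
    rewrite Rpower_mult. f_equal. unfold q; simpl; field. }
  set (X := c * (Rpower b (1 / 2) * Rpower a q) * Rpower f (1 + delta)).
  assert (HX : 0 <= X).
  { unfold X. pose proof (Rpower_pos b (1 / 2)). pose proof (Rpower_pos a q).
    pose proof (Rpower_pos f (1 + delta)). apply Rmult_le_pos; [apply Rmult_le_pos|]; nra. }
  assert (HX2 : X ^ 2 * mbar ^ 2 <= f1 ^ 2 * mbar ^ 2).
  { replace (X ^ 2 * mbar ^ 2)
      with (c ^ 2 * mbar ^ 2 * Rpower b (1 / 2) ^ 2 * (Rpower a q * Rpower f (1 + delta)) ^ 2)
      by (unfold X; ring).
    rewrite Hc2, Rpower_half_sq by lra.
    assert ((Rpower a q * Rpower f (1 + delta)) ^ 2 <= Rpower f (p + 1)).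
    { rewrite <- Hf_split. pose proof (Rpower_pos a q). pose proof (Rpower_pos f (1 + delta)).
      apply pow_incr. nra. }
    assert (mlow / (p + 1) * b * (Rpower a q * Rpower f (1 + delta)) ^ 2
            <= mlow * b / (p + 1) * Rpower f (p + 1)).
    { replace (mlow * b / (p + 1)) with (mlow / (p + 1) * b) by (field; lra).
      apply Rmult_le_compat_l; [|assumption]. apply Rmult_le_pos; [|lra].
      apply Rlt_le, Rdiv_lt_0_compat; lra. }
    assert ((mt * f1) ^ 2 <= f1 ^ 2 * mbar ^ 2).
    { rewrite Rpow_mult_distr, Rmult_comm. apply Rmult_le_compat_l; [nra|]. apply pow_incr. lra. }
    lra. }
  assert (X ^ 2 <= f1 ^ 2) by (apply Rmult_le_reg_r with (mbar ^ 2); [nra | exact HX2]).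
  nra.
Qed.

Lemma riccati_lifespan (F F1 : R -> R) (a b kappa delta : R) :
  0 < delta ->
  (forall x, a <= x < b -> is_derive F x (F1 x)) ->
  (forall x, a <= x < b -> 0 < F x) ->
  (forall x, a <= x < b -> kappa * Rpower (F x) (1 + delta) <= F1 x) ->
  forall x, a <= x < b -> delta * kappa * (x - a) * Rpower (F a) delta < 1.
Proof.
  intros Hdelta HFd HF Hric x Hx.
  (* [(F ^ (- delta))' = - delta F' / F ^ (1 + delta) <= - delta kappa] *)
  set (g := fun y => delta * kappa * (a - y) - Rpower (F y) (- delta)).
  set (g' := fun y => F1 y * (delta * Rpower (F y) (- delta - 1)) - delta * kappa).
  assert (Hg : g a <= g x).
  { apply (le_of_derive_ge0 g g'); [lra | |].
    - intros y Hy. eapply (eq_ind_r (is_derive g y)).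
      + apply (is_derive_minus (fun y => delta * kappa * (a - y))
                                (fun y => Rpower (F y) (- delta))).
        * apply is_derive_scal, (is_derive_minus (fun _ => a) (fun y => y));
            [apply is_derive_const | apply (is_derive_id (K := R_AbsRing))].
        * apply is_derive_Rpower_comp; [apply HF | apply HFd]; lra.
      + unfold g', minus, plus, opp, zero, one; simpl. ring.
    - intros y Hy. unfold g'.
      assert (HFy : 0 < F y) by (apply HF; lra).
      assert (Hinv : Rpower (F y) (1 + delta) * Rpower (F y) (- delta - 1) = 1).
      { rewrite <- Rpower_plus. replace (1 + delta + (- delta - 1)) with 0 by ring.
        apply Rpower_O, HFy. }
      pose proof (Hric y ltac:(lra)). pose proof (Rpower_pos (F y) (- delta - 1)).
      assert (Hk : kappa * Rpower (F y) (1 + delta) * Rpower (F y) (- delta - 1)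
              <= F1 y * Rpower (F y) (- delta - 1)) by (apply Rmult_le_compat_r; lra).
      rewrite Rmult_assoc, Hinv, Rmult_1_r in Hk. nra. }
  unfold g in Hg. rewrite !Rpower_Ropp in Hg.
  pose proof (Rpower_pos (F a) delta). pose proof (Rpower_pos (F x) delta).
  pose proof (Rinv_0_lt_compat _ (Rpower_pos (F x) delta)).
  assert (Hlt : delta * kappa * (x - a) < / Rpower (F a) delta) by lra.
  apply Rmult_lt_compat_r with (r := Rpower (F a) delta) in Hlt; [|assumption].
  rewrite Rinv_l in Hlt by lra. exact Hlt.
Qed.

Section Lifespan.

Variables (T p mlow mbar : R) (B m m1 F F1 F2 : R -> R).

Hypothesis Hp : 1 < p.
Hypothesis Hmlow : 0 < mlow.
Hypothesis Hm_bounds : forall t, 0 <= t < T -> mlow <= m t <= mbar.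
Hypothesis Hm : C1_on 0 T m m1.
Hypothesis HF : C1_on 0 T F F1.
Hypothesis HF1 : C1_on 0 T F1 F2.
Hypothesis HB_pos : forall t, 0 <= t < T -> 0 < B t.
Hypothesis HB_noninc : forall s t, 0 <= s -> s <= t -> t < T -> B t <= B s.
Hypothesis Hflux :
  forall t, 0 <= t < T -> B t * powR (Rabs (F t)) p <= m1 t * F1 t + m t * F2 t.
Hypothesis HF_0 : 0 <= F 0.
Hypothesis HF1_0 : 0 <= F1 0.
Hypothesis HF_F1_0 : 0 < F 0 + F1 0.

Lemma is_derive_flux t : 0 < t < T ->
  is_derive (fun t => m t * F1 t) t (m1 t * F1 t + m t * F2 t).
Proof.
  intros Ht. destruct Hm as [Hmd _]. destruct HF1 as [HF1d _].
  apply (is_derive_mult m F1); [apply Hmd, Ht | apply HF1d, Ht | intros; apply Rmult_comm].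
Qed.

Lemma flux_nondecreasing s t : 0 <= s -> s <= t -> t < T -> m s * F1 s <= m t * F1 t.
Proof.
  destruct Hm as [_ [Hmc _]]. destruct HF1 as [_ [HF1c _]].
  intros Hs Hst Ht.
  refine (nondecreasing_of_derive_ge0 (fun t => m t * F1 t) (fun t => m1 t * F1 t + m t * F2 t)
            0 T _ _ _ s t Hs Hst Ht).
  - exact is_derive_flux.
  - intros x Hx. eapply Rle_trans; [| apply Hflux; lra].
    apply Rmult_le_pos; [apply Rlt_le, HB_pos; lra | apply powR_ge0].
  - apply filterlim_Rmult; [apply within_filter, locally_filter | apply Hmc | apply HF1c]; lra.
Qed.

Lemma deriv_ge_initial_flux t : 0 <= t < T -> mlow * F1 0 / mbar <= F1 t.
Proof.
  intros Ht.
  pose proof (flux_nondecreasing 0 t ltac:(lra) ltac:(lra) ltac:(lra)).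
  pose proof (Hm_bounds 0 ltac:(lra)). pose proof (Hm_bounds t Ht).
  apply Rmult_le_reg_r with mbar; [lra|].
  replace (mlow * F1 0 / mbar * mbar) with (mlow * F1 0) by (field; lra).
  destruct (Rle_or_lt 0 (F1 t)); nra.
Qed.

Lemma F1_ge0 t : 0 <= t < T -> 0 <= F1 t.
Proof.
  intros Ht. eapply Rle_trans; [| apply deriv_ge_initial_flux, Ht].
  pose proof (Hm_bounds t Ht). apply Rmult_le_pos; [nra | apply Rlt_le, Rinv_0_lt_compat; lra].
Qed.

Lemma F_ge_linear t : 0 <= t < T -> F 0 + mlow * F1 0 / mbar * t <= F t.
Proof.
  destruct HF as [HFd [HFc _]]. intros Ht.
  set (c0 := mlow * F1 0 / mbar).
  enough (F 0 - c0 * 0 <= F t - c0 * t) by lra.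
  apply (nondecreasing_of_derive_ge0 (fun t => F t - c0 * t) (fun t => F1 t - c0) 0 T);
    try lra.
  - intros x Hx. apply (is_derive_minus F (fun t => c0 * t)); [apply HFd, Hx|].
    rewrite <- (Rmult_1_r c0) at 1. apply is_derive_scal, (is_derive_id (K := R_AbsRing)).
  - intros x Hx. pose proof (deriv_ge_initial_flux x ltac:(lra)). unfold c0. lra.
  - apply filterlim_Rminus with (f := F) (g := fun t => c0 * t);
      [apply within_filter, locally_filter | apply HFc; lra |].
    eapply filterlim_filter_le_1; [apply filter_le_within |].
    apply (is_derive_continuous (fun t => c0 * t) 0 (c0 * 1)).
    apply is_derive_scal, (is_derive_id (K := R_AbsRing)).
Qed.

Lemma F_nondecreasing s t : 0 <= s -> s <= t -> t < T -> F s <= F t.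
Proof.
  destruct HF as [HFd [HFc _]]. intros Hs Hst Ht.
  refine (nondecreasing_of_derive_ge0 F F1 0 T _ _ _ s t Hs Hst Ht).
  - intros x Hx. apply HFd, Hx.
  - intros x Hx. apply F1_ge0. lra.
  - apply HFc. lra.
Qed.

Lemma F_pos t : 0 < t < T -> 0 < F t.
Proof.
  intros Ht. pose proof (F_ge_linear t ltac:(lra)).
  pose proof (Hm_bounds t ltac:(lra)).
  assert (0 < F1 0 -> 0 < mlow * F1 0 / mbar * t).
  { intros. apply Rmult_lt_0_compat; [|lra].
    apply Rmult_lt_0_compat; [nra | apply Rinv_0_lt_compat; lra]. }
  destruct (Rle_lt_or_eq_dec 0 (F1 0) HF1_0) as [|E]; [lra|].
  rewrite <- E in *. replace (mlow * 0 / mbar * t) with 0 in * by (field; lra). lra.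
Qed.

Lemma energy_nondecreasing s t : 0 < s -> s <= t -> t < T ->
  (m s * F1 s) ^ 2 - 2 * mlow * B t / (p + 1) * Rpower (F s) (p + 1)
  <= (m t * F1 t) ^ 2 - 2 * mlow * B t / (p + 1) * Rpower (F t) (p + 1).
Proof.
  destruct HF as [HFd _]. intros Hs Hst Ht.
  set (k := 2 * mlow * B t / (p + 1)).
  apply (le_of_derive_ge0 (fun x => (m x * F1 x) ^ 2 - k * Rpower (F x) (p + 1))
    (fun x => INR 2 * (m1 x * F1 x + m x * F2 x) * (m x * F1 x) ^ 1
              - k * (F1 x * ((p + 1) * Rpower (F x) (p + 1 - 1))))); [exact Hst | |].
  - intros x Hx.
    apply (is_derive_minus (fun x => (m x * F1 x) ^ 2) (fun x => k * Rpower (F x) (p + 1))).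
    + apply (is_derive_pow (fun x => m x * F1 x)), is_derive_flux. lra.
    + apply is_derive_scal, is_derive_Rpower_comp; [apply F_pos | apply HFd]; lra.
  - intros x Hx. replace (p + 1 - 1) with p by ring. simpl INR.
    assert (HFx : 0 < F x) by (apply F_pos; lra).
    pose proof (Hm_bounds x ltac:(lra)).
    pose proof (HB_noninc x t ltac:(lra) ltac:(lra) ltac:(lra)).
    pose proof (F1_ge0 x ltac:(lra)).
    pose proof (Hflux x ltac:(lra)) as Hflux_x.
    rewrite Rabs_right, powR_Rpower in Hflux_x by lra.
    pose proof (Rpower_pos (F x) p).
    (* [(m F')' >= B(x) F^p >= B(t) F^p] and [m F' >= mlow F'] *)
    assert (mlow * F1 x * (B t * Rpower (F x) p)
            <= m x * F1 x * (m1 x * F1 x + m x * F2 x)).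
    { pose proof (HB_pos t ltac:(lra)). apply Rmult_le_compat; [nra | nra | nra |].
      apply Rle_trans with (B x * Rpower (F x) p); [|exact Hflux_x].
      apply Rmult_le_compat_r; lra. }
    replace (k * (F1 x * ((p + 1) * Rpower (F x) p)))
      with (2 * (mlow * F1 x * (B t * Rpower (F x) p))) by (unfold k; field; lra).
    lra.
Qed.

Lemma energy_lower_bound s t : 0 < s -> s <= t -> t < T -> F s <= 5 / 8 * F t ->
  mlow * B t / (p + 1) * Rpower (F t) (p + 1) <= (m t * F1 t) ^ 2.
Proof.
  intros Hs Hst Ht Hsmall.
  pose proof (energy_nondecreasing s t Hs Hst Ht).
  assert (Hpow : Rpower (F s) (p + 1) <= (5 / 8) ^ 2 * Rpower (F t) (p + 1)).
  { apply Rpower_le_sq_scaled; [| exact Hsmall | lra].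
    split; [apply F_pos; lra | apply F_nondecreasing; lra]. }
  pose proof (HB_pos t ltac:(lra)). pose proof (Rpower_pos (F t) (p + 1)).
  assert (0 <= 2 * mlow * B t / (p + 1))
    by (apply Rmult_le_pos; [nra | apply Rlt_le, Rinv_0_lt_compat; lra]).
  assert (mlow * B t / (p + 1) = (2 * mlow * B t / (p + 1)) / 2) by (field; lra).
  nra.
Qed.

Lemma F_doubles (ttil Ttil : R) : 0 < Ttil ->
  (F1 0 = 0 -> 0 < ttil < T /\ 2 * F 0 <= F ttil) ->
  T1til mbar mlow (F 0) (F1 0) ttil <= Ttil -> Ttil < T -> 2 * F 0 <= F Ttil.
Proof.
  intros HTpos Httil HT1 HT. unfold T1til in HT1.
  destruct (Req_EM_T (F1 0) 0) as [E|E].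
  - destruct (Httil E). pose proof (F_nondecreasing ttil Ttil ltac:(lra) HT1 HT). lra.
  - (* by time [mbar F(0) / (mlow F'(0))] the linear lower bound has already doubled [F(0)] *)
    pose proof (Hm_bounds 0 ltac:(lra)).
    assert (0 <= mbar / mlow * F 0 / F1 0)
      by (apply Rmult_le_pos; [apply Rmult_le_pos; [apply Rmult_le_pos|]|]; try apply Rlt_le,
            Rinv_0_lt_compat; lra).
    pose proof (F_ge_linear Ttil ltac:(lra)).
    assert (mlow * F1 0 / mbar * (mbar / mlow * F 0 / F1 0) <= mlow * F1 0 / mbar * Ttil).
    { apply Rmult_le_compat_l; [|lra].
      apply Rmult_le_pos; [nra | apply Rlt_le, Rinv_0_lt_compat; lra]. }
    replace (mlow * F1 0 / mbar * (mbar / mlow * F 0 / F1 0)) with (F 0) in * by (field; lra).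
    lra.
Qed.

(* Since F(0) <= F(T~) / 2, continuity at 0 reaches 5/8, and (5/8)^2 < 1/2 is what
   [energy_lower_bound] needs. *)
Lemma exists_F_le_five_eighths (Ttil : R) : 0 < Ttil -> Ttil < T -> 2 * F 0 <= F Ttil ->
  exists s, 0 < s <= Ttil /\ F s <= 5 / 8 * F Ttil.
Proof.
  destruct HF as [_ [HFc _]]. intros HTpos HT Hdoubles.
  assert (He : 0 < F Ttil / 8) by (pose proof (F_pos Ttil ltac:(lra)); lra).
  destruct (filterlim_locally_ball F _ _ (mkposreal _ He) (HFc 0 ltac:(lra))) as [del Hdel].
  pose proof (cond_pos del).
  exists (Rmin (del / 2) Ttil).
  assert (0 < Rmin (del / 2) Ttil) by (apply Rmin_glb_lt; lra).
  pose proof (Rmin_l (del / 2) Ttil). pose proof (Rmin_r (del / 2) Ttil).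
  split; [lra|].
  assert (Hclose : Rabs (F (Rmin (del / 2) Ttil) - F 0) < F Ttil / 8).
  { apply Hdel; [| lra]. change (Rabs (Rmin (del / 2) Ttil - 0) < del).
    rewrite Rabs_right; lra. }
  apply Rabs_def2 in Hclose. lra.
Qed.

(* The energy is compared with a time s > 0 rather than with 0, where F may vanish and
   [Rpower 0 _ = 1] is a junk value. *)
Lemma energy_lower_bound_after (Ttil : R) : 0 < Ttil -> 2 * F 0 <= F Ttil ->
  forall t, Ttil <= t < T -> mlow * B t / (p + 1) * Rpower (F t) (p + 1) <= (m t * F1 t) ^ 2.
Proof.
  intros HTpos Hdoubles t Ht.
  destruct (exists_F_le_five_eighths Ttil HTpos ltac:(lra) Hdoubles) as [s [Hs HFs]].
  apply (energy_lower_bound s); try lra.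
  pose proof (F_nondecreasing Ttil t ltac:(lra) ltac:(lra) ltac:(lra)). lra.
Qed.

Variables (T0 delta ttil Ttil : R) (A A1 B1 : R -> R).

Hypothesis HT0 : 0 <= T0.
Hypothesis HA : C1_on T0 T A A1.
Hypothesis HB : C1_on 0 T B B1.
Hypothesis HA_pos : forall t, T0 <= t < T -> 0 < A t.
Hypothesis HAF : forall t, T0 <= t < T -> A t <= F t.
Hypothesis Hdelta : 0 < delta.
Hypothesis Hdelta_max : delta < (p - 1) / 2.
Hypothesis Hh : forall t, T0 < t < T -> 0 <= Derive (hfun A B p delta) t.
Hypothesis Httil : F1 0 = 0 -> 0 < ttil < T /\ 2 * F 0 <= F ttil.
Hypothesis HTtil : Rmax T0 (T1til mbar mlow (F 0) (F1 0) ttil) <= Ttil.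

Lemma deriv_ge_riccati : 0 < Ttil -> 2 * F 0 <= F Ttil -> forall x, Ttil <= x < T ->
  / (mbar * sqrt ((p + 1) / mlow)) * hfun A B p delta Ttil * Rpower (F x) (1 + delta) <= F1 x.
Proof.
  intros HTtil_pos Hdoubles x Hx.
  assert (HT0_Ttil : T0 <= Ttil) by (eapply Rle_trans; [apply Rmax_l | exact HTtil]).
  pose proof (Hm_bounds x ltac:(lra)).
  apply Rle_trans with
    (/ (mbar * sqrt ((p + 1) / mlow)) * hfun A B p delta x * Rpower (F x) (1 + delta)).
  - apply Rmult_le_compat_r; [apply Rlt_le, Rpower_pos|].
    apply Rmult_le_compat_l.
    + apply Rlt_le, Rinv_0_lt_compat, Rmult_lt_0_compat; [lra|].
      apply sqrt_lt_R0, Rdiv_lt_0_compat; lra.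
    + apply (hfun_nondecreasing A A1 B B1 p delta T0 T); auto; lra.
  - apply (riccati_of_energy (A x) (B x) (F x) (F1 x) (m x)); try lra.
    + split; [apply HA_pos | apply HAF]; lra.
    + apply HB_pos. lra.
    + apply F1_ge0. lra.
    + apply (energy_lower_bound_after Ttil); assumption.
Qed.

Lemma lifespan_le_twice :
  / delta * mbar * sqrt ((p + 1) / mlow)
    <= Ttil * hfun A B p delta Ttil * powR (A Ttil) delta ->
  T <= 2 * Ttil.
Proof.
  intros Hlarge.
  destruct (Rle_or_lt T (2 * Ttil)) as [|Hlate]; [assumption | exfalso].
  assert (HT0_Ttil : T0 <= Ttil) by (eapply Rle_trans; [apply Rmax_l | exact HTtil]).
  set (c := / (mbar * sqrt ((p + 1) / mlow))).
  assert (Hsqrt : 0 < sqrt ((p + 1) / mlow)) by (apply sqrt_lt_R0, Rdiv_lt_0_compat; lra).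
  assert (Hmbar : 0 < mbar) by (pose proof (Hm_bounds 0 ltac:(lra)); lra).
  assert (Hc : 0 < c) by (apply Rinv_0_lt_compat, Rmult_lt_0_compat; lra).
  assert (Hone : delta * c * (/ delta * mbar * sqrt ((p + 1) / mlow)) = 1)
    by (unfold c; field; lra).
  assert (HTtil_pos : 0 < Ttil).
  { destruct (Req_dec Ttil 0) as [E|]; [exfalso | lra].
    rewrite E, !Rmult_0_l in Hlarge.
    assert (0 < / delta * mbar * sqrt ((p + 1) / mlow)); [|lra].
    repeat apply Rmult_lt_0_compat; try apply Rinv_0_lt_compat; lra. }
  assert (Hdoubles : 2 * F 0 <= F Ttil)
    by (apply (F_doubles ttil); [| | eapply Rle_trans; [apply Rmax_r | exact HTtil] |]; lra).
  set (hT := hfun A B p delta Ttil).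
  assert (HhT : 0 <= hT) by (apply Rmult_le_pos; apply powR_ge0).
  assert (HAT : 0 < A Ttil) by (apply HA_pos; lra).
  rewrite powR_Rpower in Hlarge by exact HAT.
  assert (Hbound : 1 <= delta * c * hT * Ttil * Rpower (A Ttil) delta).
  { rewrite <- Hone. replace (delta * c * hT * Ttil * Rpower (A Ttil) delta)
      with (delta * c * (Ttil * hT * Rpower (A Ttil) delta)) by ring.
    apply Rmult_le_compat_l; [nra | exact Hlarge]. }
  assert (Hblow : delta * (c * hT) * (2 * Ttil - Ttil) * Rpower (F Ttil) delta < 1).
  { apply (riccati_lifespan F F1 Ttil T); [lra | | | apply deriv_ge_riccati; assumption | lra];
      intros x Hx; [apply HF | apply F_pos]; lra. }
  assert (Rpower (A Ttil) delta <= Rpower (F Ttil) delta)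
    by (apply Rle_Rpower_l; [lra | split; [lra | apply HAF; lra]]).
  assert (0 <= delta * c * hT * Ttil)
    by (apply Rmult_le_pos; [apply Rmult_le_pos; [nra | exact HhT] | lra]).
  nra.
Qed.

End Lifespan.

Theorem lemma3p1
  (p T0 T : R) (A A1 B B1 m m1 F F1 F2 : R -> R)
  (delta mbar mlow ttil Ttil : R) :
  1 < p -> 0 <= T0 -> T0 < T ->
  C1_on T0 T A A1 -> C1_on 0 T B B1 -> C1_on 0 T m m1 ->
  (forall t, T0 <= t < T -> 0 < A t) ->
  (forall t, 0 <= t < T -> 0 < B t) ->
  (forall t, 0 <= t < T -> 0 < m t) ->
  (forall s t, 0 <= s -> s <= t -> t < T -> B t <= B s) ->
  0 < mbar -> 0 < mlow ->
  (forall t, 0 <= t < T -> mlow <= m t <= mbar) ->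
  0 < delta -> delta < (p - 1) / 2 ->
  (forall t, T0 < t < T -> 0 <= Derive (hfun A B p delta) t) ->
  C1_on 0 T F F1 -> C1_on 0 T F1 F2 ->
  (forall t, T0 <= t < T -> A t <= F t) ->
  (forall t, 0 <= t < T ->
     B t * powR (Rabs (F t)) p <= m1 t * F1 t + m t * F2 t) ->
  0 <= F 0 -> 0 <= F1 0 -> 0 < F 0 + F1 0 ->
  (F1 0 = 0 -> 0 < ttil < T /\ 2 * F 0 <= F ttil) ->
  Rmax T0 (T1til mbar mlow (F 0) (F1 0) ttil) <= Ttil ->
  / delta * mbar * sqrt ((p + 1) / mlow)
    <= Ttil * hfun A B p delta Ttil * powR (A Ttil) delta ->
  T <= 3 * Ttil.
Proof.
  intros Hp HT0 _ HA HB Hm HA_pos HB_pos _ HB_noninc _ Hmlow Hm_bounds Hdelta Hdelta_max Hh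
    HF HF1 HAF Hflux HF_0 HF1_0 HF_F1_0 Httil HTtil Hlarge.
  assert (HTtil_nonneg : 0 <= Ttil)
    by (pose proof (Rmax_l T0 (T1til mbar mlow (F 0) (F1 0) ttil)); lra).
  enough (T <= 2 * Ttil) by lra.
  exact (lifespan_le_twice T p mlow mbar B m m1 F F1 F2 Hp Hmlow Hm_bounds Hm HF HF1 HB_pos
           HB_noninc Hflux HF_0 HF1_0 HF_F1_0 T0 delta ttil Ttil A A1 B1 HT0 HA HB HA_pos HAF
           Hdelta Hdelta_max Hh Httil HTtil Hlarge).
Qed.
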